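(* An equation $u_t+C(t,x)uu_x=A^2(t,x)u_{xx}$ of the class $\mathcal L$ is mapped by a point transformation to the classical Burgers equation $\tilde u_{\tilde t}+\tilde u\tilde u_{\tilde x}=\tilde u_{\tilde x\tilde x}$ if and only if \[ \left(\frac{C(t,x)^2}{A^2(t,x)}\right)_x=0,\qquad \left(\frac{C}{A^2}\right)_t=-C_{xx}. \] A point transformation realizing this equivalence can be chosen of the form $\tilde t=T(t)$, $\tilde x=X(t,x)$, $\tilde u=U^1(t)u+U^0(t,x)$ with $T_t=C^2/A^2$, $X_x=C/A^2$, $U^1=1$ and $U^0=0$.
   Context: All functions are smooth. $\mathcal L$ denotes the class of equations $u_t+C(t,x)uu_x=A^2(t,x)u_{xx}$ for $u(t,x)$, with arbitrary elements $A^2$ and $C$ being smooth functions of $(t,x)$ with $A^2C\neq0$; $A^2$ is the name of a single function (the superscript is an index), while $C^2$ denotes the square of $C$. *)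

From Stdlib Require Import Reals.
From Coquelicot Require Import Coquelicot.
Open Scope R_scope.

Inductive dir2 := D2t | D2x.
Inductive dir3 := D3t | D3x | D3u.

(** iterated partial derivatives along a word of directions
    (the head of the list is the last derivative taken) *)
Fixpoint ipd2 (w : list dir2) (F : R -> R -> R) : R -> R -> R :=
  match w with
  | nil => F
  | cons d w' =>
      let G := ipd2 w' F in
      match d with
      | D2t => fun t x => Derive (fun s => G s x) t
      | D2x => fun t x => Derive (fun y => G t y) x
      end
  end.

Fixpoint ipd3 (w : list dir3) (F : R -> R -> R -> R) : R -> R -> R -> R :=
  match w with
  | nil => F
  | cons d w' =>
      let G := ipd3 w' F in
      match d with
      | D3t => fun t x u => Derive (fun s => G s x u) t
      | D3x => fun t x u => Derive (fun y => G t y u) x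
      | D3u => fun t x u => Derive (fun v => G t x v) u
      end
  end.

Definition smooth2 (F : R -> R -> R) : Prop :=
  forall w : list dir2,
    (forall t x, ex_derive (fun s => ipd2 w F s x) t /\
                 ex_derive (fun y => ipd2 w F t y) x) /\
    (forall t x, continuous (fun p : R * R => ipd2 w F (fst p) (snd p)) (t, x)).

Definition smooth3 (F : R -> R -> R -> R) : Prop :=
  forall w : list dir3,
    (forall t x u, ex_derive (fun s => ipd3 w F s x u) t /\
                   ex_derive (fun y => ipd3 w F t y u) x /\
                   ex_derive (fun v => ipd3 w F t x v) u) /\
    (forall t x u, continuous
       (fun p : R * R * R => ipd3 w F (fst (fst p)) (snd (fst p)) (snd p)) (t, x, u)).

Definition pd_t (F : R -> R -> R -> R) t x u := Derive (fun s => F s x u) t.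
Definition pd_x (F : R -> R -> R -> R) t x u := Derive (fun y => F t y u) x.
Definition pd_u (F : R -> R -> R -> R) t x u := Derive (fun v => F t x v) u.

Definition jacobian3 (T X U : R -> R -> R -> R) t x u : R :=
  pd_t T t x u * (pd_x X t x u * pd_u U t x u - pd_u X t x u * pd_x U t x u)
  - pd_x T t x u * (pd_t X t x u * pd_u U t x u - pd_u X t x u * pd_t U t x u)
  + pd_u T t x u * (pd_t X t x u * pd_x U t x u - pd_x X t x u * pd_t U t x u).

Definition point_transformation (T X U : R -> R -> R -> R) : Prop :=
  smooth3 T /\ smooth3 X /\ smooth3 U /\
  forall t x u, jacobian3 T X U t x u <> 0.

(** * Jet space and prolongation.
    First-order jet coordinates: (t,x,u,p,q) with p = u_t, q = u_x.
    Second-order jet coordinates: additionally (r,s,w) with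
    r = u_tt, s = u_tx, w = u_xx. *)

Definition Dt0 (F : R -> R -> R -> R) : R -> R -> R -> R -> R -> R :=
  fun t x u p q => pd_t F t x u + p * pd_u F t x u.
Definition Dx0 (F : R -> R -> R -> R) : R -> R -> R -> R -> R -> R :=
  fun t x u p q => pd_x F t x u + q * pd_u F t x u.

Definition Dt1 (G : R -> R -> R -> R -> R -> R)
  : R -> R -> R -> R -> R -> R -> R -> R -> R :=
  fun t x u p q r s w =>
    Derive (fun a => G a x u p q) t + p * Derive (fun a => G t x a p q) u
    + r * Derive (fun a => G t x u a q) p + s * Derive (fun a => G t x u p a) q.
Definition Dx1 (G : R -> R -> R -> R -> R -> R)
  : R -> R -> R -> R -> R -> R -> R -> R -> R :=
  fun t x u p q r s w =>
    Derive (fun a => G t a u p q) x + q * Derive (fun a => G t x a p q) u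
    + s * Derive (fun a => G t x u a q) p + w * Derive (fun a => G t x u p a) q.

Section Prolongation.
Variables T X U : R -> R -> R -> R.

Definition pDelta t x u p q : R :=
  Dt0 T t x u p q * Dx0 X t x u p q - Dx0 T t x u p q * Dt0 X t x u p q.

Definition new_ut t x u p q : R :=
  (Dt0 U t x u p q * Dx0 X t x u p q - Dx0 U t x u p q * Dt0 X t x u p q)
  / pDelta t x u p q.
Definition new_ux t x u p q : R :=
  (Dx0 U t x u p q * Dt0 T t x u p q - Dt0 U t x u p q * Dx0 T t x u p q)
  / pDelta t x u p q.

Definition new_uxx t x u p q r s w : R :=
  (Dx1 new_ux t x u p q r s w * Dt0 T t x u p q
   - Dt1 new_ux t x u p q r s w * Dx0 T t x u p q)
  / pDelta t x u p q.
End Prolongation.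

(** The (second-order prolongation of the) point transformation (T,X,U) maps
    the equation u_t + C u u_x = A2 u_xx into the Burgers equation
    u~_{t~} + u~ u~_{x~} = u~_{x~x~}: every point of the equation manifold
    (in the region where the prolongation is defined, pDelta <> 0) is sent to
    a point of the Burgers equation manifold. *)
Definition maps_to_Burgers (A2 C : R -> R -> R) (T X U : R -> R -> R -> R)
  : Prop :=
  forall t x u p q r s w,
    pDelta T X t x u p q <> 0 ->
    p + C t x * u * q = A2 t x * w ->
    new_ut T X U t x u p q + U t x u * new_ux T X U t x u p q
      = new_uxx T X U t x u p q r s w.

Definition class_L (A2 C : R -> R -> R) : Prop :=
  smooth2 A2 /\ smooth2 C /\ forall t x, A2 t x * C t x <> 0.

From Stdlib Require Import Reals Lra Lia List FunctionalExtensionality.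
From Coquelicot Require Import Coquelicot.
Open Scope R_scope.

(* The prolonged transformation is affine in the second derivatives, and the transformed
   equation contains neither [u_tt] nor [u_tx].  The coefficient of [u_tt] in the new [u_xx]
   is [J (T_x + u_x T_u)^2 / Delta^3], with [J] the Jacobian, so [T] depends on [t] only.  The
   coefficient of [u_xx] then gives [A2 (X_x + u_x X_u)^2 = T_t] for every [u_x], whence
   [X_u = 0] and [A2 X_x^2 = T_t].  The rest of the identity is polynomial in [u_x] and [u];
   its coefficients force [U = U1(t) u + U0(t,x)] with [C = T_t U1 / X_x],
   [U1_t X_x = - T_t U1 U0_x] and [X_t = T_t (U0 + X_xx / X_x^2)].  Hence [C^2/A2 = T_t U1^2]
   does not depend on [x], and [C/A2 = U1 X_x] has [t]-derivative [-C_xx], computed through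
   [X_xt = X_tx].  Conversely, under these two conditions the system [T' = C^2/A2],
   [X_x = C/A2], [X_t = -C_x] is compatible, and [(T, X, u)] does the job. *)

Lemma Derive_eq0_const (f : R -> R) :
  (forall y, ex_derive f y) -> (forall y, Derive f y = 0) -> forall a b, f a = f b.
Proof.
  intros Hd H0 a b.
  destruct (MVT_abs f (fun _ => 0) b a) as [c [Hc _]].
  { intros c _. apply is_derive_Reals. rewrite <- (H0 c). apply Derive_correct, Hd. }
  rewrite Rabs_R0, Rmult_0_l in Hc.
  apply Rminus_diag_uniq, Rabs_eq_0, Hc.
Qed.

Lemma ex_derive_cont (f : R -> R) x : ex_derive f x -> continuous f x.
Proof. exact (@ex_derive_continuous R_AbsRing R_NormedModule f x). Qed.

Lemma continuous_eps_delta (f : R -> R) t : continuous f t ->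
  forall eps, 0 < eps ->
  exists d, 0 < d /\ forall s, Rabs (s - t) < d -> Rabs (f s - f t) < eps.
Proof.
  intros Hc eps Heps.
  destruct (proj1 (filterlim_locally f (f t)) Hc (mkposreal eps Heps)) as [d Hd].
  exists d. split; [apply cond_pos|]. intros s Hs. exact (Hd s Hs).
Qed.

Lemma Derive_affine_div (f g h : R -> R) q x :
  ex_derive f x -> ex_derive g x -> ex_derive h x -> h x <> 0 ->
  Derive (fun y => (f y + q * g y) / h y) x =
  ((Derive f x + q * Derive g x) * h x - (f x + q * g x) * Derive h x) / h x ^ 2.
Proof.
  intros Hf Hg Hh Hnz. apply is_derive_unique. auto_derive; [repeat split; auto|].
  change (Derive (fun y => f y) x) with (Derive f x).
  change (Derive (fun y => g y) x) with (Derive g x).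
  change (Derive (fun y => h y) x) with (Derive h x). field. auto.
Qed.

Lemma Derive_affine_param (f g : R -> R) x u : ex_derive f x -> ex_derive g x ->
  Derive (fun y => f y + g y * u) x = Derive f x + Derive g x * u.
Proof.
  intros Hf Hg. apply is_derive_unique. auto_derive; [split; auto|].
  change (Derive (fun y => f y) x) with (Derive f x).
  change (Derive (fun y => g y) x) with (Derive g x). ring.
Qed.

Lemma is_derive_RInt0 (f : R -> R) t : (forall z, continuous f z) ->
  is_derive (fun b => RInt f 0 b) t (f t).
Proof.
  intros Hc. apply (is_derive_RInt f (fun b => RInt f 0 b) 0 t); [|apply Hc].
  apply filter_forall. intro b. apply (@RInt_correct R_CompleteNormedModule).
  apply (@ex_RInt_continuous R_CompleteNormedModule). intros; apply Hc.
Qed.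

(* [F u v - F t x] splits into an [x]-increment, bounded by the mean value theorem since
   [G] is bounded near [(t, x)], and a [t]-increment along the line [x = const]. *)
Lemma continuity_2d_pt_of_is_derive_x (F G : R -> R -> R) :
  (forall t x, is_derive (fun y => F t y) x (G t x)) ->
  (forall t x, continuity_2d_pt G t x) ->
  (forall t x, continuous (fun s => F s x) t) ->
  forall t x, continuity_2d_pt F t x.
Proof.
  intros HD HG HF t x eps.
  destruct (HG t x (mkposreal 1 Rlt_0_1)) as [d1 Hd1]. simpl in Hd1.
  set (M := Rabs (G t x) + 1).
  assert (HM : 0 < M) by (unfold M; pose proof (Rabs_pos (G t x)); lra).
  destruct (continuous_eps_delta (fun s => F s x) t (HF t x) (eps / 2)) as [d2 [Hd2 Hd2']].
  { pose proof (cond_pos eps); lra. }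
  assert (Hd3 : 0 < eps / (2 * M)) by (pose proof (cond_pos eps); apply Rdiv_lt_0_compat; lra).
  exists (mkposreal _ (Rmin_pos _ _ (cond_pos d1) (Rmin_pos _ _ Hd2 Hd3))). simpl.
  intros u v Hu Hv.
  pose proof (Rmin_l d1 (Rmin d2 (eps / (2 * M)))) as m1.
  pose proof (Rmin_r d1 (Rmin d2 (eps / (2 * M)))) as m2.
  pose proof (Rmin_l d2 (eps / (2 * M))) as m3.
  pose proof (Rmin_r d2 (eps / (2 * M))) as m4.
  destruct (MVT_abs (fun y => F u y) (fun y => G u y) x v) as [c [Hc1 Hc2]].
  { intros c _. apply is_derive_Reals, HD. }
  assert (HGc : Rabs (G u c) <= M).
  { assert (Rabs (c - x) < d1).
    { apply Rle_lt_trans with (Rabs (v - x)); [|lra].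
      destruct (Rle_dec x v).
      - rewrite Rmin_left, Rmax_right in Hc2 by lra. rewrite !Rabs_right; lra.
      - rewrite Rmin_right, Rmax_left in Hc2 by lra. rewrite !Rabs_left1; lra. }
    specialize (Hd1 u c ltac:(lra) H).
    unfold M. pose proof (Rabs_triang_inv (G u c) (G t x)). lra. }
  assert (Hx : Rabs (F u v - F u x) <= M * Rabs (v - x))
    by (rewrite Hc1; apply Rmult_le_compat_r; [apply Rabs_pos|auto]).
  assert (Ht : Rabs (F u x - F t x) < eps / 2) by (apply Hd2'; lra).
  assert (HMx : M * Rabs (v - x) < eps / 2).
  { apply Rlt_le_trans with (M * (eps / (2 * M))); [apply Rmult_lt_compat_l; lra|].
    right. field. lra. }
  replace (F u v - F t x) with ((F u v - F u x) + (F u x - F t x)) by ring.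
  pose proof (Rabs_triang (F u v - F u x) (F u x - F t x)). lra.
Qed.

Definition dt2 (F : R -> R -> R) t x := Derive (fun s => F s x) t.
Definition dx2 (F : R -> R -> R) t x := Derive (fun y => F t y) x.

Definition pdiff_cont2 (F : R -> R -> R) : Prop :=
  (forall t x, ex_derive (fun s => F s x) t /\ ex_derive (fun y => F t y) x) /\
  (forall t x, continuous (fun p : R * R => F (fst p) (snd p)) (t, x)).

Definition smooth2_upto (n : nat) (F : R -> R -> R) : Prop :=
  forall w, (length w <= n)%nat -> pdiff_cont2 (ipd2 w F).

Lemma ipd2_cat w1 w2 F : ipd2 (w1 ++ w2) F = ipd2 w1 (ipd2 w2 F).
Proof. induction w1 as [|d w1 IH]; simpl; [|rewrite IH]; reflexivity. Qed.

Lemma smooth2E F : smooth2 F <-> forall n, smooth2_upto n F.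
Proof.
  split; [intros H n w _; exact (H w)|].
  intros H w. exact (H (length w) w (le_n _)).
Qed.

Lemma smooth2_uptoS n F :
  smooth2_upto (S n) F <->
  pdiff_cont2 F /\ smooth2_upto n (dt2 F) /\ smooth2_upto n (dx2 F).
Proof.
  split.
  - intros H. split; [apply (H nil); simpl; lia|].
    split; intros w Hw; [specialize (H (w ++ D2t :: nil))|specialize (H (w ++ D2x :: nil))];
      rewrite ipd2_cat in H; apply H; rewrite length_app; simpl; lia.
  - intros [H0 [Ht Hx]] w. induction w as [|d w _] using rev_ind; [intros _; exact H0|].
    rewrite ipd2_cat, length_app; simpl; intros Hw.
    destruct d; [apply Ht|apply Hx]; lia.
Qed.

Lemma smooth2_upto_pred n F : smooth2_upto (S n) F -> smooth2_upto n F.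
Proof. intros H w Hw. apply H. lia. Qed.

Lemma smooth2_upto_pdiff_cont n F : smooth2_upto n F -> pdiff_cont2 F.
Proof. intros H. apply (H nil). simpl; lia. Qed.

Lemma smooth2_upto_ext n F G :
  (forall t x, F t x = G t x) -> smooth2_upto n F -> smooth2_upto n G.
Proof.
  intros H. replace G with F; [easy|].
  do 2 (apply functional_extensionality; intro). apply H.
Qed.

Lemma pdiff_cont2_const c : pdiff_cont2 (fun _ _ => c).
Proof.
  split; intros; [split; apply ex_derive_const|apply continuous_const].
Qed.

Lemma pdiff_cont2_plus F G :
  pdiff_cont2 F -> pdiff_cont2 G -> pdiff_cont2 (fun t x => F t x + G t x).
Proof.
  intros [HF HFc] [HG HGc]. split; intros t x.
  - destruct (HF t x), (HG t x).
    split; [apply (ex_derive_plus (fun s => F s x) (fun s => G s x))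
           |apply (ex_derive_plus (fun y => F t y) (fun y => G t y))]; auto.
  - apply (continuous_plus (fun p : R * R => F (fst p) (snd p))
                           (fun p : R * R => G (fst p) (snd p))); auto.
Qed.

Lemma pdiff_cont2_mult F G :
  pdiff_cont2 F -> pdiff_cont2 G -> pdiff_cont2 (fun t x => F t x * G t x).
Proof.
  intros [HF HFc] [HG HGc]. split; intros t x.
  - destruct (HF t x), (HG t x).
    split; [apply (ex_derive_mult (fun s => F s x) (fun s => G s x))
           |apply (ex_derive_mult (fun y => F t y) (fun y => G t y))]; auto.
  - apply (continuous_mult (fun p : R * R => F (fst p) (snd p))
                           (fun p : R * R => G (fst p) (snd p))); auto.
Qed.

Lemma pdiff_cont2_inv F :
  (forall t x, F t x <> 0) -> pdiff_cont2 F -> pdiff_cont2 (fun t x => / F t x).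
Proof.
  intros Hnz [HF HFc]. split; intros t x.
  - destruct (HF t x).
    split; [apply (ex_derive_inv (fun s => F s x))|apply (ex_derive_inv (fun y => F t y))]; auto.
  - apply (continuous_comp (fun p : R * R => F (fst p) (snd p)) Rinv); auto.
    now apply continuous_Rinv.
Qed.

Lemma smooth2_upto_const n c : smooth2_upto n (fun _ _ => c).
Proof.
  revert c; induction n as [|n IH]; intro c.
  - intros [|d w] Hw; [apply pdiff_cont2_const|simpl in Hw; lia].
  - apply smooth2_uptoS. split; [apply pdiff_cont2_const|].
    split; apply (smooth2_upto_ext n (fun _ _ => 0)); try apply IH;
      intros; unfold dt2, dx2; now rewrite Derive_const.
Qed.

Lemma smooth2_upto_plus n F G :
  smooth2_upto n F -> smooth2_upto n G -> smooth2_upto n (fun t x => F t x + G t x).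
Proof.
  revert F G; induction n as [|n IH]; intros F G HF HG.
  - intros [|d w] Hw; [|simpl in Hw; lia].
    apply pdiff_cont2_plus; eapply smooth2_upto_pdiff_cont; eauto.
  - apply smooth2_uptoS in HF as [[HF1 HF2] [HFt HFx]].
    apply smooth2_uptoS in HG as [[HG1 HG2] [HGt HGx]].
    apply smooth2_uptoS. split; [now apply pdiff_cont2_plus|]. split.
    + eapply smooth2_upto_ext; [|exact (IH _ _ HFt HGt)]. intros t x. unfold dt2.
      rewrite Derive_plus; [easy|exact (proj1 (HF1 _ _))|exact (proj1 (HG1 _ _))].
    + eapply smooth2_upto_ext; [|exact (IH _ _ HFx HGx)]. intros t x. unfold dx2.
      rewrite Derive_plus; [easy|exact (proj2 (HF1 _ _))|exact (proj2 (HG1 _ _))].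
Qed.

Lemma smooth2_upto_mult n F G :
  smooth2_upto n F -> smooth2_upto n G -> smooth2_upto n (fun t x => F t x * G t x).
Proof.
  revert F G; induction n as [|n IH]; intros F G HF HG.
  - intros [|d w] Hw; [|simpl in Hw; lia].
    apply pdiff_cont2_mult; eapply smooth2_upto_pdiff_cont; eauto.
  - pose proof (smooth2_upto_pred _ _ HF) as HFn.
    pose proof (smooth2_upto_pred _ _ HG) as HGn.
    apply smooth2_uptoS in HF as [[HF1 HF2] [HFt HFx]].
    apply smooth2_uptoS in HG as [[HG1 HG2] [HGt HGx]].
    apply smooth2_uptoS. split; [now apply pdiff_cont2_mult|]. split.
    + eapply smooth2_upto_ext; [|exact (smooth2_upto_plus _ _ _ (IH _ _ HFt HGn) (IH _ _ HFn HGt))].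
      intros t x. unfold dt2.
      rewrite Derive_mult; [easy|exact (proj1 (HF1 _ _))|exact (proj1 (HG1 _ _))].
    + eapply smooth2_upto_ext; [|exact (smooth2_upto_plus _ _ _ (IH _ _ HFx HGn) (IH _ _ HFn HGx))].
      intros t x. unfold dx2.
      rewrite Derive_mult; [easy|exact (proj2 (HF1 _ _))|exact (proj2 (HG1 _ _))].
Qed.

Lemma smooth2_upto_inv n F :
  (forall t x, F t x <> 0) -> smooth2_upto n F -> smooth2_upto n (fun t x => / F t x).
Proof.
  revert F; induction n as [|n IH]; intros F Hnz HF.
  - intros [|d w] Hw; [|simpl in Hw; lia].
    apply pdiff_cont2_inv; [easy|]. eapply smooth2_upto_pdiff_cont; eauto.
  - pose proof (IH _ Hnz (smooth2_upto_pred _ _ HF)) as HI.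
    apply smooth2_uptoS in HF as [[HF1 HF2] [HFt HFx]].
    apply smooth2_uptoS. split; [now apply pdiff_cont2_inv|].
    split.
    + eapply smooth2_upto_ext; [|exact (smooth2_upto_mult _ _ _ (smooth2_upto_mult _ _ _
        (smooth2_upto_mult _ _ _ (smooth2_upto_const n (-1)) HFt) HI) HI)].
      intros t x. unfold dt2.
      rewrite Derive_inv; [field; auto|exact (proj1 (HF1 _ _))|auto].
    + eapply smooth2_upto_ext; [|exact (smooth2_upto_mult _ _ _ (smooth2_upto_mult _ _ _
        (smooth2_upto_mult _ _ _ (smooth2_upto_const n (-1)) HFx) HI) HI)].
      intros t x. unfold dx2.
      rewrite Derive_inv; [|exact (proj2 (HF1 _ _))|auto].
      change (Derive (F t) x) with (Derive (fun y => F t y) x). field; auto.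
Qed.

Lemma smooth2_pdiff_cont F : smooth2 F -> pdiff_cont2 F.
Proof. intros H. exact (H nil). Qed.

Lemma smooth2_ext F G : (forall t x, F t x = G t x) -> smooth2 F -> smooth2 G.
Proof. rewrite !smooth2E. intros H HF n. exact (smooth2_upto_ext n F G H (HF n)). Qed.

Lemma smooth2_const c : smooth2 (fun _ _ => c).
Proof. rewrite smooth2E. intro n. apply smooth2_upto_const. Qed.

Lemma smooth2_mult F G : smooth2 F -> smooth2 G -> smooth2 (fun t x => F t x * G t x).
Proof. rewrite !smooth2E. intros HF HG n. now apply smooth2_upto_mult. Qed.

Lemma smooth2_inv F : (forall t x, F t x <> 0) -> smooth2 F -> smooth2 (fun t x => / F t x).
Proof. rewrite !smooth2E. intros Hnz HF n. now apply smooth2_upto_inv. Qed.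

Lemma smooth2_dt F : smooth2 F -> smooth2 (dt2 F).
Proof. rewrite !smooth2E. intros H n. apply (proj1 (smooth2_uptoS n F) (H (S n))). Qed.

Lemma smooth2_dx F : smooth2 F -> smooth2 (dx2 F).
Proof. rewrite !smooth2E. intros H n. apply (proj1 (smooth2_uptoS n F) (H (S n))). Qed.

Lemma smooth2_of_partials F :
  pdiff_cont2 F -> smooth2 (dt2 F) -> smooth2 (dx2 F) -> smooth2 F.
Proof.
  rewrite !smooth2E. intros H0 Ht Hx [|n].
  - intros [|d w] Hw; [exact H0|simpl in Hw; lia].
  - apply smooth2_uptoS. auto.
Qed.

Definition pdiff_cont3 (F : R -> R -> R -> R) : Prop :=
  (forall t x u, ex_derive (fun s => F s x u) t /\
                 ex_derive (fun y => F t y u) x /\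
                 ex_derive (fun v => F t x v) u) /\
  (forall t x u, continuous
     (fun p : R * R * R => F (fst (fst p)) (snd (fst p)) (snd p)) (t, x, u)).

Lemma fun3_ext (F G : R -> R -> R -> R) : (forall t x u, F t x u = G t x u) -> F = G.
Proof.
  intros H. apply functional_extensionality; intro t.
  apply functional_extensionality; intro x. apply functional_extensionality, H.
Qed.

Lemma smooth3_coind (S : (R -> R -> R -> R) -> Prop) :
  (forall F, S F -> pdiff_cont3 F /\ S (pd_t F) /\ S (pd_x F) /\ S (pd_u F)) ->
  forall F, S F -> smooth3 F.
Proof.
  intros H F HF.
  assert (Hw : forall w, S (ipd3 w F)).
  { induction w as [|[] w IH]; [exact HF| | |]; apply H, IH. }
  intros w. apply (H _ (Hw w)).
Qed.

Lemma smooth3_affine_u (G : R -> R -> R) (c : R) :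
  smooth2 G -> smooth3 (fun t x u => G t x + c * u).
Proof.
  intros HG.
  apply (smooth3_coind (fun F => exists G c, smooth2 G /\ F = fun t x u => G t x + c * u)).
  2:{ exists G, c; auto. }
  clear G c HG. intros F [G [c [HG ->]]].
  destruct (smooth2_pdiff_cont _ HG) as [HG1 HG2].
  assert (Hlin : forall v, ex_derive (fun v => c * v) v)
    by (intro; apply ex_derive_scal, ex_derive_id).
  split; [split|split; [|split]].
  - intros t x u. split; [|split].
    + apply (ex_derive_plus (fun s => G s x) (fun _ => c * u));
        [exact (proj1 (HG1 _ _))|apply ex_derive_const].
    + apply (ex_derive_plus (fun y => G t y) (fun _ => c * u));
        [exact (proj2 (HG1 _ _))|apply ex_derive_const].
    + apply (ex_derive_plus (fun _ => G t x) (fun v => c * v)); [apply ex_derive_const|auto].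
  - intros t x u.
    apply (continuous_plus (fun p : R * R * R => G (fst (fst p)) (snd (fst p)))
                           (fun p : R * R * R => c * snd p)).
    + apply (continuous_comp (fun p : R * R * R => fst p) (fun q : R * R => G (fst q) (snd q))).
      * apply continuous_fst.
      * apply HG2.
    + apply (continuous_mult (fun _ : R * R * R => c) (fun p : R * R * R => snd p)).
      * apply continuous_const.
      * apply continuous_snd.
  - exists (dt2 G), 0. split; [now apply smooth2_dt|].
    apply fun3_ext; intros t x u. unfold pd_t, dt2.
    rewrite Derive_plus, Derive_const; [ring|exact (proj1 (HG1 _ _))|apply ex_derive_const].
  - exists (dx2 G), 0. split; [now apply smooth2_dx|].
    apply fun3_ext; intros t x u. unfold pd_x, dx2.
    rewrite Derive_plus, Derive_const; [|exact (proj2 (HG1 _ _))|apply ex_derive_const].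
    change (Derive (G t) x) with (Derive (fun y => G t y) x). ring.
  - exists (fun _ _ => c), 0. split; [apply smooth2_const|].
    apply fun3_ext; intros t x u. unfold pd_u.
    rewrite Derive_plus, Derive_const, Derive_scal, Derive_id; [ring|apply ex_derive_const|auto].
Qed.

Lemma smooth3_of_smooth2 (G : R -> R -> R) : smooth2 G -> smooth3 (fun t x u => G t x).
Proof.
  intros HG. replace (fun t x u => G t x) with (fun t x (u : R) => G t x + 0 * u).
  - now apply smooth3_affine_u.
  - apply fun3_ext; intros t x u. ring.
Qed.

Lemma smooth3_ex_derive_t F w t x u : smooth3 F -> ex_derive (fun s => ipd3 w F s x u) t.
Proof. intros H. apply (proj1 (proj1 (H w) t x u)). Qed.

Lemma smooth3_ex_derive_x F w t x u : smooth3 F -> ex_derive (fun y => ipd3 w F t y u) x.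
Proof. intros H. apply (proj1 (proj2 (proj1 (H w) t x u))). Qed.

Lemma smooth3_ex_derive_u F w t x u : smooth3 F -> ex_derive (fun v => ipd3 w F t x v) u.
Proof. intros H. apply (proj2 (proj2 (proj1 (H w) t x u))). Qed.

Lemma smooth3_continuity_2d_pt F w t x u :
  smooth3 F -> continuity_2d_pt (fun a b => ipd3 w F a b u) t x.
Proof.
  intros H. apply continuity_2d_pt_filterlim.
  apply (continuous_comp_2 (fun z : R * R => z) (fun _ : R * R => u)
     (fun (a : R * R) (b : R) => ipd3 w F (fst a) (snd a) b) (t, x)).
  - apply continuous_id.
  - apply continuous_const.
  - exact (proj2 (H w) t x u).
Qed.

Lemma smooth2_continuous_t (F : R -> R -> R) t x : smooth2 F -> continuous (fun s => F s x) t.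
Proof. intros H. apply ex_derive_cont, (proj1 (smooth2_pdiff_cont _ H) t x). Qed.

Lemma smooth2_continuous_x (F : R -> R -> R) t x : smooth2 F -> continuous (fun y => F t y) x.
Proof. intros H. apply ex_derive_cont, (proj1 (smooth2_pdiff_cont _ H) t x). Qed.

Lemma smooth3_id_u : smooth3 (fun t x u => 1 * u + 0).
Proof.
  replace (fun t x u => 1 * u + 0) with (fun (t x : R) u => (fun _ _ => 0) t x + 1 * u).
  - apply smooth3_affine_u, smooth2_const.
  - apply fun3_ext. intros. ring.
Qed.

(** * Algebra of the prolonged transformation *)
Section JetAlgebra.
Variables Tt Tx Tu Xt Xx Xu Ut Ux Uu : R.

Definition jet_delta p q := (Tt + p * Tu) * (Xx + q * Xu) - (Tx + q * Tu) * (Xt + p * Xu).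

Definition jet_ux p q :=
  ((Ux + q * Uu) * (Tt + p * Tu) - (Ut + p * Uu) * (Tx + q * Tu)) / jet_delta p q.

Definition jet_jac :=
  Tt * (Xx * Uu - Xu * Ux) - Tx * (Xt * Uu - Xu * Ut) + Tu * (Xt * Ux - Xx * Ut).

Lemma is_derive_jet_ux_p p q : jet_delta p q <> 0 ->
  is_derive (fun z => jet_ux z q) p (- jet_jac * (Tx + q * Tu) / jet_delta p q ^ 2).
Proof.
  unfold jet_ux, jet_delta, jet_jac. intros HD.
  auto_derive; [exact HD|]. field. exact HD.
Qed.

(* [jet_jac <> 0] makes the affine function [jet_delta] nonzero, so the product
   [jet_delta p q * (Tx + q Tu)], which vanishes identically, has a vanishing second factor. *)
Lemma jet_fibre_preserving : jet_jac <> 0 ->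
  (forall p q, jet_delta p q <> 0 -> Tx + q * Tu = 0) -> Tx = 0 /\ Tu = 0.
Proof.
  intros HJ H.
  assert (HG : forall p q, jet_delta p q * (Tx + q * Tu) = 0).
  { intros p q. destruct (Req_dec (jet_delta p q) 0) as [E|E].
    - rewrite E. ring.
    - rewrite (H p q E). ring. }
  set (l0 := Tt * Xx - Tx * Xt). set (l1 := Tu * Xx - Tx * Xu). set (l2 := Tt * Xu - Tu * Xt).
  assert (HGc : forall p q, l0 * Tx + l1 * Tx * p + (l2 * Tx + l0 * Tu) * q
                  + l1 * Tu * p * q + l2 * Tu * q ^ 2 = 0).
  { intros p q. rewrite <- (HG p q). unfold jet_delta, l0, l1, l2. ring. }
  pose proof (HGc 0 0) as e00. pose proof (HGc 1 0) as e10. pose proof (HGc 0 1) as e01.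
  pose proof (HGc 0 (-1)) as e0m. pose proof (HGc 1 1) as e11.
  assert (h0 : l0 * Tx = 0) by lra. assert (h1 : l1 * Tx = 0) by lra.
  assert (h2 : l2 * Tu = 0) by lra. assert (h3 : l2 * Tx + l0 * Tu = 0) by lra.
  assert (h4 : l1 * Tu = 0) by lra.
  assert (h5 : l0 * Tu = 0).
  { assert (E : (l0 * Tu) ^ 2 = l0 * Tu * (l2 * Tx + l0 * Tu) - l0 * Tx * (l2 * Tu)) by ring.
    rewrite h2, h3 in E. simpl in E. nra. }
  assert (HJl : jet_jac = - Ut * l1 - Ux * l2 + Uu * l0) by (unfold jet_jac, l0, l1, l2; ring).
  split; apply (Rmult_eq_reg_l jet_jac); auto; rewrite Rmult_0_r, HJl.
  - replace ((- Ut * l1 - Ux * l2 + Uu * l0) * Tx)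
      with (- Ut * (l1 * Tx) - Ux * (l2 * Tx + l0 * Tu) + Ux * (l0 * Tu) + Uu * (l0 * Tx)) by ring.
    rewrite h0, h1, h3, h5. ring.
  - replace ((- Ut * l1 - Ux * l2 + Uu * l0) * Tu)
      with (- Ut * (l1 * Tu) - Ux * (l2 * Tu) + Uu * (l0 * Tu)) by ring.
    rewrite h2, h4, h5. ring.
Qed.
End JetAlgebra.

Lemma Rdiv_mult_cancel_l (a y m : R) : a <> 0 -> (a * y) / (a * m) = y / m.
Proof.
  intros Ha. unfold Rdiv. rewrite Rinv_mult.
  replace (a * y * (/ a * / m)) with ((a * / a) * (y * / m)) by ring.
  rewrite Rinv_r by exact Ha. ring.
Qed.

Lemma Rdiv_neq_0 (a b : R) : a <> 0 -> b <> 0 -> a / b <> 0.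
Proof.
  intros Ha Hb. apply Rmult_integral_contrapositive_currified; [easy|].
  now apply Rinv_neq_0_compat.
Qed.

Lemma nonzero_coeff_of_difference (a b D : R) : D <> 0 -> (a - b) / D = 0 -> a = b.
Proof.
  intros HD H. unfold Rdiv in H. apply Rmult_integral in H as [H|H]; [lra|].
  now apply Rinv_neq_0_compat in HD.
Qed.

Lemma quadratic_coeffs_eq0 (c0 c1 c2 : R) :
  (forall z, c0 + c1 * z + c2 * z ^ 2 = 0) -> c0 = 0 /\ c1 = 0 /\ c2 = 0.
Proof.
  intros H. pose proof (H 0) as h0. pose proof (H 1) as h1. pose proof (H (-1)) as h2.
  simpl in *. lra.
Qed.

Lemma square_affine_const_slope0 (A a e f : R) : A <> 0 ->
  (forall q, e + q * f <> 0 -> A * (e + q * f) ^ 2 = a) -> f = 0.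
Proof.
  intros HA H. destruct (Req_dec f 0) as [|Hf]; [easy|exfalso].
  pose proof (H ((f - e) / f)) as h1. pose proof (H ((2 * f - e) / f)) as h2.
  replace (e + (f - e) / f * f) with f in h1 by (field; auto).
  replace (e + (2 * f - e) / f * f) with (2 * f) in h2 by (field; auto).
  specialize (h1 Hf). specialize (h2 ltac:(lra)).
  assert (E : A * f ^ 2 * 3 = 0) by nra.
  apply Rmult_integral in E as [E|E]; [|lra].
  apply Rmult_integral in E as [E|E]; [easy|]. exact (pow_nonzero f 2 Hf E).
Qed.

(* The transformed equation, for a transformation with [T_x = T_u = 0], along the
   equation manifold [p = A w - cu q]: both sides are affine in [w = u_xx]. *)
Lemma burgers_w_slope (A Ut Ux Uu Xt Xx Xu Tt q U0 cu G : R) :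
  Tt <> 0 -> Xx + q * Xu <> 0 -> Uu * Xx - Ux * Xu <> 0 ->
  (forall w,
     ((Ut + (A * w - cu * q) * Uu) * (Xx + q * Xu) - (Ux + q * Uu) * (Xt + (A * w - cu * q) * Xu))
       / (Tt * (Xx + q * Xu)) + U0 * ((Ux + q * Uu) / (Xx + q * Xu))
     = (G + w * ((Uu * Xx - Ux * Xu) / (Xx + q * Xu) ^ 2)) / (Xx + q * Xu)) ->
  A * (Xx + q * Xu) ^ 2 = Tt.
Proof.
  intros HT Hm HU H. pose proof (H 0) as e0. pose proof (H 1) as e1.
  apply (nonzero_coeff_of_difference _ _ (Tt * (Xx + q * Xu) ^ 3 / (Uu * Xx - Ux * Xu))).
  { apply Rdiv_neq_0; [apply Rmult_integral_contrapositive_currified|]; auto.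
    now apply pow_nonzero. }
  match type of e1 with ?L1 = ?R1 => match type of e0 with ?L0 = ?R0 =>
    transitivity ((L1 - R1) - (L0 - R0)); [|rewrite e0, e1; ring] end end.
  field. repeat split; auto.
Qed.

(* The same equation at [w = 0], as a quadratic polynomial in [q = u_x]. *)
Lemma burgers_q_coeffs (Ut Ux Uu Xt Xx Tt cu U0 Uxx Uux Xxx Uxu Uuu : R) :
  Tt <> 0 -> Xx <> 0 ->
  (forall q, ((Ut + (- cu * q) * Uu) * Xx - (Ux + q * Uu) * Xt) / (Tt * Xx)
               + U0 * ((Ux + q * Uu) / Xx)
             = (((Uxx + q * Uux) * Xx - (Ux + q * Uu) * Xxx) / Xx ^ 2
                + q * ((Uxu + q * Uuu) / Xx)) / Xx) ->
  Uuu = 0 /\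
  (- cu * Uu * Xx - Uu * Xt) / (Tt * Xx) + U0 * Uu / Xx - (Uux * Xx - Uu * Xxx) / Xx ^ 3
    - Uxu / Xx ^ 2 = 0 /\
  (Ut * Xx - Ux * Xt) / (Tt * Xx) + U0 * Ux / Xx - (Uxx * Xx - Ux * Xxx) / Xx ^ 3 = 0.
Proof.
  intros HT HX H.
  destruct (quadratic_coeffs_eq0
     ((Ut * Xx - Ux * Xt) / (Tt * Xx) + U0 * Ux / Xx - (Uxx * Xx - Ux * Xxx) / Xx ^ 3)
     ((- cu * Uu * Xx - Uu * Xt) / (Tt * Xx) + U0 * Uu / Xx - (Uux * Xx - Uu * Xxx) / Xx ^ 3
        - Uxu / Xx ^ 2)
     (- Uuu / Xx ^ 2)) as [r0 [r1 r2]].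
  { intro q. pose proof (H q) as Hq. match type of Hq with ?L = ?R =>
      transitivity (L - R); [field; auto|rewrite Hq; ring] end. }
  repeat split; auto.
  replace Uuu with (- (- Uuu / Xx ^ 2) * Xx ^ 2) by (field; auto). rewrite r2. ring.
Qed.

(** * Necessity *)

Section Necessity.
Variables (A2 C : R -> R -> R) (T X U : R -> R -> R -> R).
Hypothesis A2_neq0 : forall t x, A2 t x <> 0.
Hypotheses (HT : smooth3 T) (HX : smooth3 X) (HU : smooth3 U).
Hypothesis HJ : forall t x u, jacobian3 T X U t x u <> 0.
Hypothesis HM : maps_to_Burgers A2 C T X U.

Lemma T_fibre_preserving t x u : pd_x T t x u = 0 /\ pd_u T t x u = 0.
Proof.
  set (Tt := pd_t T t x u); set (Tx := pd_x T t x u); set (Tu := pd_u T t x u).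
  set (Xt := pd_t X t x u); set (Xx := pd_x X t x u); set (Xu := pd_u X t x u).
  set (Ut := pd_t U t x u); set (Ux := pd_x U t x u); set (Uu := pd_u U t x u).
  apply (jet_fibre_preserving Tt Tx Tu Xt Xx Xu Ut Ux Uu); [exact (HJ t x u)|].
  intros p q HD.
  set (w := (p + C t x * u * q) / A2 t x).
  assert (Heq : p + C t x * u * q = A2 t x * w) by (unfold w; field; apply A2_neq0).
  (* [u_tt] enters the transformed [u_xx] only through [(d new_ux / dp) * (T_x + q T_u)],
     whereas the transformed equation does not involve it. *)
  assert (Hr : 0 = Derive (fun a => new_ux T X U t x u a q) p * (Tx + q * Tu)
                   / pDelta T X t x u p q).
  { transitivity (new_uxx T X U t x u p q 0 0 w - new_uxx T X U t x u p q 1 0 w).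
    - rewrite <- (HM t x u p q 0 0 w HD Heq), <- (HM t x u p q 1 0 w HD Heq). ring.
    - unfold new_uxx, Dt1, Dx1, Dx0, Tx, Tu. field. exact HD. }
  assert (Hp : Derive (fun a => new_ux T X U t x u a q) p
               = - jet_jac Tt Tx Tu Xt Xx Xu Ut Ux Uu * (Tx + q * Tu)
                 / jet_delta Tt Tx Tu Xt Xx Xu p q ^ 2)
    by exact (is_derive_unique _ _ _ (is_derive_jet_ux_p _ _ _ _ _ _ _ _ _ p q HD)).
  rewrite Hp in Hr. change (pDelta T X t x u p q) with (jet_delta Tt Tx Tu Xt Xx Xu p q) in Hr.
  assert (E : jet_jac Tt Tx Tu Xt Xx Xu Ut Ux Uu * (Tx + q * Tu) ^ 2 = 0).
  { match type of Hr with 0 = ?e =>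
      transitivity (- e * jet_delta Tt Tx Tu Xt Xx Xu p q ^ 3);
        [field; exact HD|rewrite <- Hr; ring] end. }
  apply Rmult_integral in E as [E|E]; [now exfalso; apply (HJ t x u)|nra].
Qed.

Lemma pd_x_T_eq0 t x u : pd_x T t x u = 0.
Proof. apply T_fibre_preserving. Qed.

Lemma pd_u_T_eq0 t x u : pd_u T t x u = 0.
Proof. apply T_fibre_preserving. Qed.

Lemma jacobian3_fibre t x u : jacobian3 T X U t x u =
  pd_t T t x u * (pd_x X t x u * pd_u U t x u - pd_u X t x u * pd_x U t x u).
Proof. unfold jacobian3. rewrite pd_x_T_eq0, pd_u_T_eq0. ring. Qed.

Lemma pd_t_T_neq0 t x u : pd_t T t x u <> 0.
Proof. intro H. apply (HJ t x u). rewrite jacobian3_fibre, H. ring. Qed.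

Lemma pDelta_fibre t x u p q :
  pDelta T X t x u p q = pd_t T t x u * (pd_x X t x u + q * pd_u X t x u).
Proof. unfold pDelta, Dx0, Dt0. rewrite pd_x_T_eq0, pd_u_T_eq0. ring. Qed.

Lemma new_ux_fibre t x u p q : new_ux T X U t x u p q =
  (pd_x U t x u + q * pd_u U t x u) / (pd_x X t x u + q * pd_u X t x u).
Proof.
  unfold new_ux. rewrite pDelta_fibre. unfold Dx0, Dt0. rewrite pd_x_T_eq0, pd_u_T_eq0.
  rewrite <- (Rdiv_mult_cancel_l (pd_t T t x u) _ (pd_x X t x u + q * pd_u X t x u))
    by apply pd_t_T_neq0.
  f_equal. ring.
Qed.

Lemma new_ut_fibre t x u p q : new_ut T X U t x u p q =
  ((pd_t U t x u + p * pd_u U t x u) * (pd_x X t x u + q * pd_u X t x u)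
   - (pd_x U t x u + q * pd_u U t x u) * (pd_t X t x u + p * pd_u X t x u))
  / (pd_t T t x u * (pd_x X t x u + q * pd_u X t x u)).
Proof. unfold new_ut. rewrite pDelta_fibre. reflexivity. Qed.

Lemma new_uxx_fibre t x u p q r s w : new_uxx T X U t x u p q r s w =
  Dx1 (new_ux T X U) t x u p q r s w / (pd_x X t x u + q * pd_u X t x u).
Proof.
  unfold new_uxx. rewrite pDelta_fibre. unfold Dx0, Dt0. rewrite pd_x_T_eq0, pd_u_T_eq0.
  rewrite <- (Rdiv_mult_cancel_l (pd_t T t x u) _ (pd_x X t x u + q * pd_u X t x u))
    by apply pd_t_T_neq0.
  f_equal. ring.
Qed.

Lemma Derive_x_new_ux t x u p q : Derive (fun y => new_ux T X U t y u p q) x =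
  Derive (fun y => (pd_x U t y u + q * pd_u U t y u) / (pd_x X t y u + q * pd_u X t y u)) x.
Proof. apply Derive_ext. intro y. apply new_ux_fibre. Qed.

Lemma Derive_u_new_ux t x u p q : Derive (fun v => new_ux T X U t x v p q) u =
  Derive (fun v => (pd_x U t x v + q * pd_u U t x v) / (pd_x X t x v + q * pd_u X t x v)) u.
Proof. apply Derive_ext. intro v. apply new_ux_fibre. Qed.

Lemma Derive_q_new_ux t x u p q : pd_x X t x u + q * pd_u X t x u <> 0 ->
  Derive (fun z => new_ux T X U t x u p z) q =
  (pd_u U t x u * pd_x X t x u - pd_x U t x u * pd_u X t x u)
  / (pd_x X t x u + q * pd_u X t x u) ^ 2.
Proof.
  intros Hm.
  rewrite (Derive_ext _ (fun z => (pd_x U t x u + z * pd_u U t x u)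
                                  / (pd_x X t x u + z * pd_u X t x u)))
    by (intro; apply new_ux_fibre).
  apply is_derive_unique. auto_derive; [exact Hm|]. field. exact Hm.
Qed.

Lemma A2_Xxu_sq t x u q : pd_x X t x u + q * pd_u X t x u <> 0 ->
  A2 t x * (pd_x X t x u + q * pd_u X t x u) ^ 2 = pd_t T t x u.
Proof.
  intros Hm.
  apply (burgers_w_slope (A2 t x) (pd_t U t x u) (pd_x U t x u) (pd_u U t x u)
    (pd_t X t x u) (pd_x X t x u) (pd_u X t x u) (pd_t T t x u) q (U t x u) (C t x * u)
    (Derive (fun y => (pd_x U t y u + q * pd_u U t y u) / (pd_x X t y u + q * pd_u X t y u)) x
     + q * Derive (fun v => (pd_x U t x v + q * pd_u U t x v)
                            / (pd_x X t x v + q * pd_u X t x v)) u));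
    [apply pd_t_T_neq0|exact Hm| |].
  { intro H. apply (HJ t x u). rewrite jacobian3_fibre.
    replace (pd_x X t x u * pd_u U t x u - pd_u X t x u * pd_x U t x u) with 0 by lra. ring. }
  intros w.
  set (p := A2 t x * w - C t x * u * q).
  assert (HD : pDelta T X t x u p q <> 0).
  { rewrite pDelta_fibre.
    apply Rmult_integral_contrapositive_currified; [apply pd_t_T_neq0|exact Hm]. }
  assert (Heq : p + C t x * u * q = A2 t x * w) by (unfold p; ring).
  pose proof (HM t x u p q 0 0 w HD Heq) as E.
  rewrite new_ut_fibre, new_ux_fibre, new_uxx_fibre in E. unfold Dx1 in E.
  rewrite Derive_x_new_ux, Derive_u_new_ux, Derive_q_new_ux, Rmult_0_l, Rplus_0_r in E by exact Hm.
  exact E.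
Qed.

Lemma pd_u_X_eq0 t x u : pd_u X t x u = 0.
Proof.
  apply (square_affine_const_slope0 (A2 t x) (pd_t T t x u) (pd_x X t x u)); [apply A2_neq0|].
  intros q Hq. now apply A2_Xxu_sq.
Qed.

Lemma pd_x_X_neq0 t x u : pd_x X t x u <> 0.
Proof. intro H. apply (HJ t x u). rewrite jacobian3_fibre, H, pd_u_X_eq0. ring. Qed.

Lemma pd_u_U_neq0 t x u : pd_u U t x u <> 0.
Proof. intro H. apply (HJ t x u). rewrite jacobian3_fibre, H, pd_u_X_eq0. ring. Qed.

Lemma A2_Xx_sq t x u : A2 t x * pd_x X t x u ^ 2 = pd_t T t x u.
Proof.
  pose proof (A2_Xxu_sq t x u 0) as H. rewrite Rmult_0_l, Rplus_0_r in H.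
  apply H, pd_x_X_neq0.
Qed.

Lemma X_indep_u t x u : X t x u = X t x 0.
Proof.
  apply (Derive_eq0_const (fun v => X t x v)); intro v;
    [exact (smooth3_ex_derive_u X nil t x v HX)|apply pd_u_X_eq0].
Qed.

Lemma pd_x_X_indep_u t x u : pd_x X t x u = pd_x X t x 0.
Proof. apply Derive_ext. intro y. apply X_indep_u. Qed.

Lemma Derive_x_new_ux_fibre t x u q :
  Derive (fun y => (pd_x U t y u + q * pd_u U t y u) / (pd_x X t y u + q * pd_u X t y u)) x =
  ((Derive (fun y => pd_x U t y u) x + q * Derive (fun y => pd_u U t y u) x) * pd_x X t x u
   - (pd_x U t x u + q * pd_u U t x u) * Derive (fun y => pd_x X t y u) x) / pd_x X t x u ^ 2.
Proof.
  rewrite (Derive_ext _ (fun y => (pd_x U t y u + q * pd_u U t y u) / pd_x X t y u))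
    by (intro; rewrite pd_u_X_eq0; f_equal; ring).
  apply (Derive_affine_div (fun y => pd_x U t y u) (fun y => pd_u U t y u) (fun y => pd_x X t y u)).
  - exact (smooth3_ex_derive_x U (D3x :: nil) t x u HU).
  - exact (smooth3_ex_derive_x U (D3u :: nil) t x u HU).
  - exact (smooth3_ex_derive_x X (D3x :: nil) t x u HX).
  - apply pd_x_X_neq0.
Qed.

Lemma Derive_u_new_ux_fibre t x u q :
  Derive (fun v => (pd_x U t x v + q * pd_u U t x v) / (pd_x X t x v + q * pd_u X t x v)) u =
  (Derive (fun v => pd_x U t x v) u + q * Derive (fun v => pd_u U t x v) u) / pd_x X t x u.
Proof.
  rewrite (Derive_ext _ (fun v => (pd_x U t x v + q * pd_u U t x v) * / pd_x X t x 0))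
    by (intro v; rewrite pd_u_X_eq0, (pd_x_X_indep_u t x v), Rmult_0_r, Rplus_0_r; reflexivity).
  pose proof (smooth3_ex_derive_u U (D3x :: nil) t x u HU) as HUx.
  pose proof (smooth3_ex_derive_u U (D3u :: nil) t x u HU) as HUu.
  rewrite Derive_mult, Derive_const, Derive_plus, Derive_scal, <- (pd_x_X_indep_u t x u);
    [rewrite Rmult_0_r, Rplus_0_r; reflexivity
    |exact HUx|apply ex_derive_scal, HUu| |apply ex_derive_const].
  apply (ex_derive_plus (fun v => pd_x U t x v) (fun v => q * pd_u U t x v));
    [exact HUx|apply ex_derive_scal, HUu].
Qed.

Lemma burgers_q_identities t x u :
  Derive (fun v => pd_u U t x v) u = 0 /\
  (- (C t x * u) * pd_u U t x u * pd_x X t x u - pd_u U t x u * pd_t X t x u)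
    / (pd_t T t x u * pd_x X t x u)
  + U t x u * pd_u U t x u / pd_x X t x u
  - (Derive (fun y => pd_u U t y u) x * pd_x X t x u
     - pd_u U t x u * Derive (fun y => pd_x X t y u) x) / pd_x X t x u ^ 3
  - Derive (fun v => pd_x U t x v) u / pd_x X t x u ^ 2 = 0 /\
  (pd_t U t x u * pd_x X t x u - pd_x U t x u * pd_t X t x u) / (pd_t T t x u * pd_x X t x u)
  + U t x u * pd_x U t x u / pd_x X t x u
  - (Derive (fun y => pd_x U t y u) x * pd_x X t x u
     - pd_x U t x u * Derive (fun y => pd_x X t y u) x) / pd_x X t x u ^ 3 = 0.
Proof.
  apply burgers_q_coeffs; [apply pd_t_T_neq0|apply pd_x_X_neq0|].
  intro q.
  set (p := - (C t x * u) * q).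
  assert (HD : pDelta T X t x u p q <> 0).
  { rewrite pDelta_fibre, pd_u_X_eq0, Rmult_0_r, Rplus_0_r.
    apply Rmult_integral_contrapositive_currified; [apply pd_t_T_neq0|apply pd_x_X_neq0]. }
  assert (Heq : p + C t x * u * q = A2 t x * 0) by (unfold p; ring).
  pose proof (HM t x u p q 0 0 0 HD Heq) as E.
  rewrite new_ut_fibre, new_ux_fibre, new_uxx_fibre in E. unfold Dx1 in E.
  rewrite Derive_x_new_ux, Derive_u_new_ux, Derive_x_new_ux_fibre, Derive_u_new_ux_fibre,
    !Rmult_0_l, !Rplus_0_r, !pd_u_X_eq0, !Rmult_0_r, !Rplus_0_r in E.
  exact E.
Qed.

Definition U1 t x := pd_u U t x 0.
Definition U0 t x := U t x 0.

Lemma pd_u_U_eq_U1 t x u : pd_u U t x u = U1 t x.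
Proof.
  apply (Derive_eq0_const (fun v => pd_u U t x v)); intro v;
    [exact (smooth3_ex_derive_u U (D3u :: nil) t x v HU)|apply burgers_q_identities].
Qed.

Lemma U_affine t x u : U t x u = U0 t x + U1 t x * u.
Proof.
  assert (Hlin : forall v, ex_derive (fun v => U1 t x * v) v)
    by (intro; apply ex_derive_scal, ex_derive_id).
  assert (H : U t x u - U1 t x * u = U t x 0 - U1 t x * 0).
  { apply (Derive_eq0_const (fun v => U t x v - U1 t x * v)); intro v.
    - apply (ex_derive_minus (fun v => U t x v) (fun v => U1 t x * v));
        [exact (smooth3_ex_derive_u U nil t x v HU)|apply Hlin].
    - rewrite Derive_minus, Derive_scal, Derive_id;
        [|exact (smooth3_ex_derive_u U nil t x v HU)|apply Hlin].
      change (pd_u U t x v - U1 t x * 1 = 0). rewrite pd_u_U_eq_U1. ring. }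
  unfold U0. lra.
Qed.

Lemma U1_neq0 t x : U1 t x <> 0.
Proof. apply pd_u_U_neq0. Qed.

Lemma ex_derive_U0_x t x : ex_derive (fun y => U0 t y) x.
Proof. exact (smooth3_ex_derive_x U nil t x 0 HU). Qed.
Lemma ex_derive_U1_x t x : ex_derive (fun y => U1 t y) x.
Proof. exact (smooth3_ex_derive_x U (D3u :: nil) t x 0 HU). Qed.
Lemma ex_derive_U0_t t x : ex_derive (fun s => U0 s x) t.
Proof. exact (smooth3_ex_derive_t U nil t x 0 HU). Qed.
Lemma ex_derive_U1_t t x : ex_derive (fun s => U1 s x) t.
Proof. exact (smooth3_ex_derive_t U (D3u :: nil) t x 0 HU). Qed.
Lemma ex_derive_U0x_x t x : ex_derive (fun y => Derive (fun y' => U0 t y') y) x.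
Proof. exact (smooth3_ex_derive_x U (D3x :: nil) t x 0 HU). Qed.
Lemma ex_derive_U1x_x t x : ex_derive (fun y => Derive (fun y' => U1 t y') y) x.
Proof. exact (smooth3_ex_derive_x U (D3x :: D3u :: nil) t x 0 HU). Qed.

Lemma pd_x_U_affine t x u :
  pd_x U t x u = Derive (fun y => U0 t y) x + Derive (fun y => U1 t y) x * u.
Proof.
  unfold pd_x. rewrite (Derive_ext _ (fun y => U0 t y + U1 t y * u)) by (intro; apply U_affine).
  apply Derive_affine_param; [apply ex_derive_U0_x|apply ex_derive_U1_x].
Qed.

Lemma pd_t_U_affine t x u :
  pd_t U t x u = Derive (fun s => U0 s x) t + Derive (fun s => U1 s x) t * u.
Proof.
  unfold pd_t. rewrite (Derive_ext _ (fun s => U0 s x + U1 s x * u)) by (intro; apply U_affine).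
  apply Derive_affine_param; [apply ex_derive_U0_t|apply ex_derive_U1_t].
Qed.

Lemma Derive_x_pd_x_U t x u : Derive (fun y => pd_x U t y u) x =
  Derive (fun y => Derive (fun y' => U0 t y') y) x
  + Derive (fun y => Derive (fun y' => U1 t y') y) x * u.
Proof.
  rewrite (Derive_ext _ (fun y => Derive (fun y' => U0 t y') y + Derive (fun y' => U1 t y') y * u))
    by (intro; apply pd_x_U_affine).
  apply Derive_affine_param; [apply ex_derive_U0x_x|apply ex_derive_U1x_x].
Qed.

Lemma Derive_x_pd_u_U t x u : Derive (fun y => pd_u U t y u) x = Derive (fun y => U1 t y) x.
Proof. apply Derive_ext. intro; apply pd_u_U_eq_U1. Qed.

Lemma Derive_u_pd_x_U t x u : Derive (fun v => pd_x U t x v) u = Derive (fun y => U1 t y) x.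
Proof.
  rewrite (Derive_ext _ (fun v => Derive (fun y => U0 t y) x + Derive (fun y => U1 t y) x * v))
    by (intro; apply pd_x_U_affine).
  apply is_derive_unique. auto_derive; [auto|]. ring.
Qed.

Lemma T_indep_u t x u : T t x u = T t x 0.
Proof.
  apply (Derive_eq0_const (fun v => T t x v)); intro v;
    [exact (smooth3_ex_derive_u T nil t x v HT)|apply pd_u_T_eq0].
Qed.

Lemma pd_t_T_indep_u t x u : pd_t T t x u = pd_t T t x 0.
Proof. apply Derive_ext. intro; apply T_indep_u. Qed.

Lemma pd_t_X_indep_u t x u : pd_t X t x u = pd_t X t x 0.
Proof. apply Derive_ext. intro; apply X_indep_u. Qed.

Lemma Derive_x_pd_x_X_indep_u t x u :
  Derive (fun y => pd_x X t y u) x = Derive (fun y => pd_x X t y 0) x.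
Proof. apply Derive_ext. intro; apply pd_x_X_indep_u. Qed.

Definition Tt0 t x := pd_t T t x 0.
Definition Xt0 t x := pd_t X t x 0.
Definition Xx0 t x := pd_x X t x 0.
Definition Xxx0 t x := Derive (fun y => pd_x X t y 0) x.
Definition U0t t x := Derive (fun s => U0 s x) t.
Definition U1t t x := Derive (fun s => U1 s x) t.
Definition U0x t x := Derive (fun y => U0 t y) x.
Definition U1x t x := Derive (fun y => U1 t y) x.
Definition U0xx t x := Derive (fun y => Derive (fun y' => U0 t y') y) x.
Definition U1xx t x := Derive (fun y => Derive (fun y' => U1 t y') y) x.

Lemma Tt0_neq0 t x : Tt0 t x <> 0.
Proof. apply pd_t_T_neq0. Qed.

Lemma Xx0_neq0 t x : Xx0 t x <> 0.
Proof. apply pd_x_X_neq0. Qed.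

Lemma burgers_u_poly0 t x : forall u,
  ((U0t t x * Xx0 t x - U0x t x * Xt0 t x) / (Tt0 t x * Xx0 t x) + U0 t x * U0x t x / Xx0 t x
   - (U0xx t x * Xx0 t x - U0x t x * Xxx0 t x) / Xx0 t x ^ 3)
  + ((U1t t x * Xx0 t x - U1x t x * Xt0 t x) / (Tt0 t x * Xx0 t x)
     + (U0 t x * U1x t x + U1 t x * U0x t x) / Xx0 t x
     - (U1xx t x * Xx0 t x - U1x t x * Xxx0 t x) / Xx0 t x ^ 3) * u
  + (U1 t x * U1x t x / Xx0 t x) * u ^ 2 = 0.
Proof.
  intro u. destruct (burgers_q_identities t x u) as [_ [_ E]].
  rewrite Derive_x_pd_x_U, Derive_x_pd_x_X_indep_u, pd_t_U_affine, pd_x_U_affine, U_affine,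
    pd_t_T_indep_u, pd_x_X_indep_u, pd_t_X_indep_u in E.
  pose proof (Tt0_neq0 t x). pose proof (Xx0_neq0 t x).
  unfold Tt0, Xx0, Xt0, Xxx0, U0t, U1t, U0x, U1x, U0xx, U1xx in *.
  match type of E with ?L = 0 => transitivity L; [field; auto|exact E] end.
Qed.

Lemma burgers_u_poly1 t x : forall u,
  (- U1 t x * Xt0 t x / (Tt0 t x * Xx0 t x) + U0 t x * U1 t x / Xx0 t x
   - (U1x t x * Xx0 t x - U1 t x * Xxx0 t x) / Xx0 t x ^ 3 - U1x t x / Xx0 t x ^ 2)
  + (- C t x * U1 t x / Tt0 t x + U1 t x * U1 t x / Xx0 t x) * u + 0 * u ^ 2 = 0.
Proof.
  intro u. destruct (burgers_q_identities t x u) as [_ [E _]].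
  rewrite Derive_x_pd_u_U, Derive_u_pd_x_U, Derive_x_pd_x_X_indep_u, pd_u_U_eq_U1, U_affine,
    pd_t_T_indep_u, pd_x_X_indep_u, pd_t_X_indep_u in E.
  pose proof (Tt0_neq0 t x). pose proof (Xx0_neq0 t x).
  unfold Tt0, Xx0, Xt0, Xxx0, U0t, U1t, U0x, U1x, U0xx, U1xx in *.
  match type of E with ?L = 0 => transitivity L; [field; auto|exact E] end.
Qed.

Lemma U1x_eq0 t x : U1x t x = 0.
Proof.
  destruct (quadratic_coeffs_eq0 _ _ _ (burgers_u_poly0 t x)) as [_ [_ H]].
  pose proof (Xx0_neq0 t x). pose proof (U1_neq0 t x).
  apply (Rmult_eq_reg_l (U1 t x / Xx0 t x)); [|now apply Rdiv_neq_0].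
  rewrite Rmult_0_r. match type of H with ?L = 0 => transitivity L; [field; auto|exact H] end.
Qed.

Lemma U1_indep_x t x : U1 t x = U1 t 0.
Proof.
  apply (Derive_eq0_const (fun y => U1 t y)); intro; [apply ex_derive_U1_x|apply U1x_eq0].
Qed.

Lemma U1t_eq t x : U1t t x * Xx0 t x = - Tt0 t x * U1 t x * U0x t x.
Proof.
  destruct (quadratic_coeffs_eq0 _ _ _ (burgers_u_poly0 t x)) as [_ [H _]].
  assert (U1xx_eq0 : U1xx t x = 0).
  { unfold U1xx. rewrite (Derive_ext _ (fun _ => 0)) by (intro; apply U1x_eq0).
    apply Derive_const. }
  rewrite U1x_eq0, U1xx_eq0 in H. pose proof (Tt0_neq0 t x). pose proof (Xx0_neq0 t x).
  apply Rminus_diag_uniq. match type of H with ?L = 0 =>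
    transitivity (L * (Tt0 t x * Xx0 t x)); [field; auto|rewrite H; ring] end.
Qed.

Lemma C_eq t x : C t x = Tt0 t x * U1 t x / Xx0 t x.
Proof.
  destruct (quadratic_coeffs_eq0 _ _ _ (burgers_u_poly1 t x)) as [_ [H _]].
  pose proof (Tt0_neq0 t x). pose proof (Xx0_neq0 t x). pose proof (U1_neq0 t x).
  apply (Rmult_eq_reg_l (U1 t x / Tt0 t x)); [|now apply Rdiv_neq_0].
  apply Rminus_diag_uniq_sym.
  match type of H with ?L = 0 => transitivity L; [field; auto|exact H] end.
Qed.

Lemma Xt0_eq t x : Xt0 t x = Tt0 t x * (U0 t x + Xxx0 t x / Xx0 t x ^ 2).
Proof.
  destruct (quadratic_coeffs_eq0 _ _ _ (burgers_u_poly1 t x)) as [H _].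
  rewrite U1x_eq0 in H.
  pose proof (Tt0_neq0 t x). pose proof (Xx0_neq0 t x). pose proof (U1_neq0 t x).
  apply (Rmult_eq_reg_l (U1 t x / (Tt0 t x * Xx0 t x)));
    [|apply Rdiv_neq_0; [|apply Rmult_integral_contrapositive]; auto].
  apply Rminus_diag_uniq_sym.
  match type of H with ?L = 0 => transitivity L; [field; auto|exact H] end.
Qed.

Lemma A2_eq t x : A2 t x = Tt0 t x / Xx0 t x ^ 2.
Proof. unfold Tt0, Xx0. rewrite <- (A2_Xx_sq t x 0). field. apply pd_x_X_neq0. Qed.

Lemma Tt0_indep_x t x : Tt0 t x = Tt0 t 0.
Proof.
  apply Derive_ext. intro s.
  apply (Derive_eq0_const (fun y => T s y 0)); intro y;
    [exact (smooth3_ex_derive_x T nil s y 0 HT)|apply pd_x_T_eq0].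
Qed.

Lemma C2_div_A2_x_eq0 t x : Derive (fun y => C t y ^ 2 / A2 t y) x = 0.
Proof.
  rewrite (Derive_ext _ (fun _ => Tt0 t 0 * U1 t 0 ^ 2)); [apply Derive_const|].
  intro y. rewrite C_eq, A2_eq, Tt0_indep_x, (U1_indep_x t y).
  pose proof (Tt0_neq0 t 0). pose proof (Xx0_neq0 t y). field. auto.
Qed.

Lemma Xx0_t_eq_Xt0_x t x : Derive (fun s => Xx0 s x) t = Derive (fun y => Xt0 t y) x.
Proof.
  apply (Schwarz (fun s y => X s y 0) t x).
  - exists (mkposreal 1 Rlt_0_1). intros u v _ _. repeat split.
    + exact (smooth3_ex_derive_t X nil u v 0 HX).
    + exact (smooth3_ex_derive_x X nil u v 0 HX).
    + exact (smooth3_ex_derive_t X (D3x :: nil) u v 0 HX).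
    + exact (smooth3_ex_derive_x X (D3t :: nil) u v 0 HX).
  - exact (smooth3_continuity_2d_pt X (D3t :: D3x :: nil) t x 0 HX).
  - exact (smooth3_continuity_2d_pt X (D3x :: D3t :: nil) t x 0 HX).
Qed.

Definition Xxx_Xx2 t x := Xxx0 t x / Xx0 t x ^ 2.

Lemma ex_derive_Xxx_Xx2 t x : ex_derive (fun y => Xxx_Xx2 t y) x.
Proof.
  apply (ex_derive_div (fun y => Xxx0 t y) (fun y => Xx0 t y ^ 2));
    [|apply ex_derive_pow|apply pow_nonzero, Xx0_neq0].
  - exact (smooth3_ex_derive_x X (D3x :: D3x :: nil) t x 0 HX).
  - exact (smooth3_ex_derive_x X (D3x :: nil) t x 0 HX).
Qed.

Lemma Cx_eq t x : Derive (fun z => C t z) x = - (Tt0 t 0 * U1 t 0) * Xxx_Xx2 t x.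
Proof.
  rewrite (Derive_ext _ (fun z => Tt0 t 0 * U1 t 0 * / Xx0 t z))
    by (intro z; rewrite C_eq, Tt0_indep_x, (U1_indep_x t z); reflexivity).
  rewrite Derive_scal, Derive_inv;
    [|exact (smooth3_ex_derive_x X (D3x :: nil) t x 0 HX)|apply Xx0_neq0].
  unfold Xxx_Xx2. change (Derive (Xx0 t) x) with (Xxx0 t x). field. apply Xx0_neq0.
Qed.

(* With [K := T_t U1], independent of [x]: [C/A2 = U1 X_x], [C = K / X_x] and
   [X_t = T_t (U0 + X_xx / X_x^2)], so that [(C/A2)_t = U1_t X_x + U1 X_xt = K (X_xx / X_x^2)_x]. *)
Lemma C_div_A2_t_eq t x :
  Derive (fun s => C s x / A2 s x) t = - Derive (fun y => Derive (fun z => C t z) y) x.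
Proof.
  rewrite (Derive_ext _ (fun s => U1 s x * Xx0 s x)).
  2:{ intro s. rewrite C_eq, A2_eq. pose proof (Tt0_neq0 s x). pose proof (Xx0_neq0 s x).
      field. auto. }
  rewrite Derive_mult, Xx0_t_eq_Xt0_x;
    [|apply ex_derive_U1_t|exact (smooth3_ex_derive_t X (D3x :: nil) t x 0 HX)].
  rewrite (Derive_ext (fun y => Xt0 t y) (fun y => Tt0 t 0 * (U0 t y + Xxx_Xx2 t y)))
    by (intro y; rewrite Xt0_eq, Tt0_indep_x; reflexivity).
  rewrite (Derive_ext (fun y => Derive (fun z => C t z) y)
                      (fun y => - (Tt0 t 0 * U1 t 0) * Xxx_Xx2 t y)) by (intro; apply Cx_eq).
  rewrite !Derive_scal, Derive_plus; [|apply ex_derive_U0_x|apply ex_derive_Xxx_Xx2].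
  pose proof (U1t_eq t x) as H. unfold U1t in H.
  rewrite Tt0_indep_x, (U1_indep_x t x) in *. rewrite H.
  change (Derive (U0 t) x) with (U0x t x). ring.
Qed.

Lemma burgers_conditions_necessary :
  (forall t x, Derive (fun y => C t y ^ 2 / A2 t y) x = 0) /\
  (forall t x, Derive (fun s => C s x / A2 s x) t
               = - Derive (fun y => Derive (fun z => C t z) y) x).
Proof. split; intros t x; [apply C2_div_A2_x_eq0|apply C_div_A2_t_eq]. Qed.
End Necessity.

(** * Sufficiency *)
Section Sufficiency.
Variables (A2 C : R -> R -> R).
Hypotheses (HA2 : smooth2 A2) (HC : smooth2 C) (HAC : forall t x, A2 t x * C t x <> 0).
Hypothesis KT_x_eq0 : forall t x, Derive (fun y => C t y ^ 2 / A2 t y) x = 0.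
Hypothesis KX_t_eq : forall t x,
  Derive (fun s => C s x / A2 s x) t = - Derive (fun y => Derive (fun z => C t z) y) x.

Lemma A2_neq0 t x : A2 t x <> 0.
Proof. intro H. apply (HAC t x). rewrite H. ring. Qed.

Lemma C_neq0 t x : C t x <> 0.
Proof. intro H. apply (HAC t x). rewrite H. ring. Qed.

Definition KT t x := C t x ^ 2 / A2 t x.
Definition KX t x := C t x / A2 t x.

Lemma KT_smooth : smooth2 KT.
Proof.
  apply (smooth2_ext (fun t x => (C t x * C t x) * / A2 t x)); [intros; unfold KT, Rdiv; ring|].
  apply smooth2_mult; [now apply smooth2_mult|apply smooth2_inv; [apply A2_neq0|easy]].
Qed.

Lemma KX_smooth : smooth2 KX.
Proof.
  apply (smooth2_ext (fun t x => C t x * / A2 t x)); [intros; unfold KX, Rdiv; ring|].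
  apply smooth2_mult; [easy|apply smooth2_inv; [apply A2_neq0|easy]].
Qed.

Lemma Cx_smooth : smooth2 (dx2 C).
Proof. exact (smooth2_dx C HC). Qed.

Lemma KT_indep_x t x : KT t x = KT t 0.
Proof.
  apply (Derive_eq0_const (fun y => KT t y)); intro y;
    [apply (proj1 (smooth2_pdiff_cont _ KT_smooth) t y)|apply KT_x_eq0].
Qed.

Lemma KT_neq0 t x : KT t x <> 0.
Proof. apply Rdiv_neq_0; [apply pow_nonzero, C_neq0|apply A2_neq0]. Qed.

Lemma KX_neq0 t x : KX t x <> 0.
Proof. apply Rdiv_neq_0; [apply C_neq0|apply A2_neq0]. Qed.

Lemma KX_eq t x : KX t x = KT t 0 / C t x.
Proof.
  rewrite <- (KT_indep_x t x). unfold KT, KX.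
  pose proof (A2_neq0 t x). pose proof (C_neq0 t x). field. auto.
Qed.

Lemma A2_eq_KT t x : A2 t x = C t x ^ 2 / KT t 0.
Proof.
  rewrite <- (KT_indep_x t x). unfold KT.
  pose proof (A2_neq0 t x). pose proof (C_neq0 t x). field. auto.
Qed.

Definition burgers_T t := RInt (fun s => KT s 0) 0 t.

(* [X_x = C / A2] and [X_t = - C_x]; these are compatible by the hypothesis [KX_t_eq]. *)
Definition burgers_X t x := RInt (fun y => KX t y) 0 x - RInt (fun s => dx2 C s 0) 0 t.

Lemma is_derive_burgers_T t : is_derive burgers_T t (KT t 0).
Proof. apply (is_derive_RInt0 (fun s => KT s 0)). intro. apply smooth2_continuous_t, KT_smooth. Qed.

Lemma is_derive_x_burgers_X t x : is_derive (fun y => burgers_X t y) x (KX t x).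
Proof.
  unfold burgers_X. replace (KX t x) with (KX t x + 0) by ring.
  apply (is_derive_plus (fun y => RInt (fun y' => KX t y') 0 y)
                        (fun _ => - RInt (fun s => dx2 C s 0) 0 t)).
  - apply (is_derive_RInt0 (fun y => KX t y)). intro. apply smooth2_continuous_x, KX_smooth.
  - exact (@is_derive_const R_AbsRing R_NormedModule _ x).
Qed.

Lemma is_derive_t_RInt_KX t x :
  is_derive (fun s => RInt (fun y => KX s y) 0 x) t (- (dx2 C t x - dx2 C t 0)).
Proof.
  replace (- (dx2 C t x - dx2 C t 0)) with (RInt (fun y => Derive (fun s => KX s y) t) 0 x).
  - apply (is_derive_RInt_param (fun s y => KX s y) 0 x t).
    + apply filter_forall. intros s y _. apply (proj1 (smooth2_pdiff_cont _ KX_smooth) s y).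
    + intros y _. apply continuity_2d_pt_filterlim.
      apply (proj2 (smooth2_pdiff_cont _ (smooth2_dt KX KX_smooth))).
    + apply filter_forall. intro s. apply (@ex_RInt_continuous R_CompleteNormedModule).
      intros. apply smooth2_continuous_x, KX_smooth.
  - pose proof (smooth2_pdiff_cont _ Cx_smooth) as [HCx _].
    pose proof (smooth2_pdiff_cont _ (smooth2_dx _ Cx_smooth)) as [HCxx _].
    rewrite (RInt_ext _ (fun y => - Derive (fun z => dx2 C t z) y)) by (intros y _; apply KX_t_eq).
    transitivity (opp (RInt (fun y => Derive (fun z => dx2 C t z) y) 0 x)).
    + apply (@RInt_opp R_CompleteNormedModule), (@ex_RInt_continuous R_CompleteNormedModule).
      intros z _. apply ex_derive_cont, HCxx.
    + rewrite (RInt_Derive (fun z => dx2 C t z)); [reflexivity| |]; intros z _;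
        [apply HCx|apply ex_derive_cont, HCxx].
Qed.

Lemma is_derive_t_burgers_X t x : is_derive (fun s => burgers_X s x) t (- dx2 C t x).
Proof.
  replace (- dx2 C t x) with (- (dx2 C t x - dx2 C t 0) - dx2 C t 0) by ring.
  apply (is_derive_minus (fun s => RInt (fun y => KX s y) 0 x)
                         (fun s => RInt (fun s' => dx2 C s' 0) 0 s)).
  - apply is_derive_t_RInt_KX.
  - apply (is_derive_RInt0 (fun s => dx2 C s 0)). intro. apply smooth2_continuous_t, Cx_smooth.
Qed.

Lemma burgers_X_smooth : smooth2 burgers_X.
Proof.
  apply smooth2_of_partials.
  - split; intros t x.
    + split; [exists (- dx2 C t x); apply is_derive_t_burgers_X
             |exists (KX t x); apply is_derive_x_burgers_X].
    + apply continuity_2d_pt_filterlim, (continuity_2d_pt_of_is_derive_x burgers_X KX).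
      * intros; apply is_derive_x_burgers_X.
      * intros s y. apply continuity_2d_pt_filterlim, (proj2 (smooth2_pdiff_cont _ KX_smooth)).
      * intros s y. apply ex_derive_cont. exists (- dx2 C s y). apply is_derive_t_burgers_X.
  - apply (smooth2_ext (fun t x => -1 * dx2 C t x)).
    + intros t x. unfold dt2. erewrite is_derive_unique; [|apply is_derive_t_burgers_X]. ring.
    + apply smooth2_mult; [apply smooth2_const|apply Cx_smooth].
  - apply (smooth2_ext KX); [|exact KX_smooth].
    intros t x. symmetry. apply is_derive_unique, is_derive_x_burgers_X.
Qed.

Lemma burgers_T_smooth : smooth2 (fun t x => burgers_T t).
Proof.
  apply smooth2_of_partials.
  - split; intros t x.
    + split; [exists (KT t 0); apply is_derive_burgers_T|apply ex_derive_const].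
    + apply (continuous_comp (fun p : R * R => fst p) burgers_T); [apply continuous_fst|].
      apply ex_derive_cont. exists (KT t 0). apply is_derive_burgers_T.
  - apply (smooth2_ext KT); [|exact KT_smooth].
    intros t x. unfold dt2. erewrite is_derive_unique; [|apply is_derive_burgers_T].
    apply KT_indep_x.
  - apply (smooth2_ext (fun _ _ => 0)); [|apply smooth2_const].
    intros t x. unfold dx2. now rewrite Derive_const.
Qed.

Definition Tb (t x u : R) := burgers_T t.
Definition Xb (t x u : R) := burgers_X t x.
Definition Ub (t x u : R) := 1 * u + 0.

Lemma pd_t_Tb t x u : pd_t Tb t x u = KT t 0.
Proof. unfold pd_t, Tb. apply is_derive_unique, is_derive_burgers_T. Qed.
Lemma pd_x_Tb t x u : pd_x Tb t x u = 0.
Proof. unfold pd_x, Tb. apply Derive_const. Qed.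
Lemma pd_u_Tb t x u : pd_u Tb t x u = 0.
Proof. unfold pd_u, Tb. apply Derive_const. Qed.
Lemma pd_t_Xb t x u : pd_t Xb t x u = - dx2 C t x.
Proof. unfold pd_t, Xb. apply is_derive_unique, is_derive_t_burgers_X. Qed.
Lemma pd_x_Xb t x u : pd_x Xb t x u = KX t x.
Proof. unfold pd_x, Xb. apply is_derive_unique, is_derive_x_burgers_X. Qed.
Lemma pd_u_Xb t x u : pd_u Xb t x u = 0.
Proof. unfold pd_u, Xb. apply Derive_const. Qed.
Lemma pd_t_Ub t x u : pd_t Ub t x u = 0.
Proof. unfold pd_t, Ub. apply Derive_const. Qed.
Lemma pd_x_Ub t x u : pd_x Ub t x u = 0.
Proof. unfold pd_x, Ub. apply Derive_const. Qed.
Lemma pd_u_Ub t x u : pd_u Ub t x u = 1.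
Proof. unfold pd_u, Ub. apply is_derive_unique. auto_derive; [easy|ring]. Qed.

#[local] Hint Rewrite pd_t_Tb pd_x_Tb pd_u_Tb pd_t_Xb pd_x_Xb pd_u_Xb pd_t_Ub pd_x_Ub pd_u_Ub
  : pd_burgers.

Lemma burgers_jacobian_neq0 t x u : jacobian3 Tb Xb Ub t x u <> 0.
Proof.
  unfold jacobian3. autorewrite with pd_burgers.
  replace (KT t 0 * (KX t x * 1 - 0 * 0) - 0 * (- dx2 C t x * 1 - 0 * 0)
           + 0 * (- dx2 C t x * 0 - KX t x * 0)) with (KT t 0 * KX t x) by ring.
  apply Rmult_integral_contrapositive_currified; [apply KT_neq0|apply KX_neq0].
Qed.

Lemma new_ux_burgers t x u p q : new_ux Tb Xb Ub t x u p q = q / KX t x.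
Proof.
  unfold new_ux, pDelta, Dx0, Dt0. autorewrite with pd_burgers.
  rewrite <- (Rdiv_mult_cancel_l (KT t 0) q (KX t x)) by apply KT_neq0.
  f_equal; ring.
Qed.

Lemma burgers_maps : maps_to_Burgers A2 C Tb Xb Ub.
Proof.
  intros t x u p q r s w HD Heq.
  unfold new_uxx, Dx1, Dt1.
  rewrite (Derive_ext (fun a => new_ux _ _ _ t a u p q) (fun a => q / KT t 0 * C t a)).
  2:{ intro. rewrite new_ux_burgers, KX_eq. field. split; [apply KT_neq0|apply C_neq0]. }
  rewrite (Derive_ext (fun a => new_ux _ _ _ t x u p a) (fun a => a / KX t x))
    by (intro; apply new_ux_burgers).
  rewrite (Derive_ext (fun a => new_ux _ _ _ t x a p q) (fun _ => q / KX t x))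
    by (intro; apply new_ux_burgers).
  rewrite (Derive_ext (fun a => new_ux _ _ _ t x u a q) (fun _ => q / KX t x))
    by (intro; apply new_ux_burgers).
  rewrite Derive_scal, !Derive_const.
  replace (Derive (fun a => a / KX t x) q) with (/ KX t x).
  2:{ symmetry. apply is_derive_unique. auto_derive; [easy|]. field. apply KX_neq0. }
  rewrite new_ux_burgers. unfold new_ut, pDelta, Dx0, Dt0. autorewrite with pd_burgers.
  replace p with (A2 t x * w - C t x * u * q) by lra.
  rewrite A2_eq_KT, KX_eq. unfold Ub. change (Derive (C t) x) with (dx2 C t x).
  pose proof (KT_neq0 t 0). pose proof (C_neq0 t x). field. auto.
Qed.

Lemma burgers_transformation_exists :
  exists (T : R -> R) (X : R -> R -> R),
    point_transformation (fun t x u => T t) (fun t x u => X t x) (fun t x u => 1 * u + 0) /\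
    maps_to_Burgers A2 C (fun t x u => T t) (fun t x u => X t x) (fun t x u => 1 * u + 0) /\
    (forall t x, Derive T t = C t x ^ 2 / A2 t x) /\
    (forall t x, Derive (fun y => X t y) x = C t x / A2 t x).
Proof.
  exists burgers_T, burgers_X. split; [|split; [exact burgers_maps|split]].
  - split; [|split; [|split]].
    + apply (smooth3_of_smooth2 (fun t x => burgers_T t)), burgers_T_smooth.
    + apply smooth3_of_smooth2, burgers_X_smooth.
    + exact smooth3_id_u.
    + exact burgers_jacobian_neq0.
  - intros t x. rewrite (is_derive_unique _ _ _ (is_derive_burgers_T t)).
    symmetry. apply KT_indep_x.
  - intros t x. apply is_derive_unique, is_derive_x_burgers_X.
Qed.
End Sufficiency.

Theorem corollary4 (A2 C : R -> R -> R) :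
  class_L A2 C ->
  ((exists T X U : R -> R -> R -> R,
       point_transformation T X U /\ maps_to_Burgers A2 C T X U)
   <->
   ((forall t x, Derive (fun y => C t y ^ 2 / A2 t y) x = 0) /\
    (forall t x, Derive (fun s => C s x / A2 s x) t
                 = - Derive (fun y => Derive (fun z => C t z) y) x)))
  /\
  (((forall t x, Derive (fun y => C t y ^ 2 / A2 t y) x = 0) /\
    (forall t x, Derive (fun s => C s x / A2 s x) t
                 = - Derive (fun y => Derive (fun z => C t z) y) x)) ->
   exists (T : R -> R) (X : R -> R -> R),
     point_transformation (fun t x u => T t) (fun t x u => X t x)
                          (fun t x u => 1 * u + 0) /\
     maps_to_Burgers A2 C (fun t x u => T t) (fun t x u => X t x)
                          (fun t x u => 1 * u + 0) /\
     (forall t x, Derive T t = C t x ^ 2 / A2 t x) /\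
     (forall t x, Derive (fun y => X t y) x = C t x / A2 t x)).
Proof.
  intros [HA2 [HC HAC]].
  assert (HA2nz : forall t x, A2 t x <> 0)
    by (intros t x E; apply (HAC t x); rewrite E; ring).
  split; [split|].
  - intros [T [X [U [[HT [HX [HU HJ]]] HM]]]].
    exact (burgers_conditions_necessary A2 C T X U HA2nz HT HX HU HJ HM).
  - intros [HK HXt].
    destruct (burgers_transformation_exists A2 C HA2 HC HAC HK HXt) as [T [X [HP [HM _]]]].
    eauto.
  - intros [HK HXt]. exact (burgers_transformation_exists A2 C HA2 HC HAC HK HXt).
Qed.
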